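(* Assume (H$\mathscr K$), (H$\mathscr L$), (H$\mathscr M$), (H$\mathscr F$), (H$\mathscr G$), (H$\mathscr E$), (H$\gamma$), (H$\Psi$), $c_{\mathscr F}>c_{\mathscr G}\|\gamma\|^p$, and that $\mathscr F$ is strictly monotone, so that Problem 2 has a unique solution $\mathscr S(z,\xi)$ for each $(z,\xi)\in\mathscr K\times Y^*$. Define $\mathcal Q\colon\mathscr K\times Y^*\to 2^{\mathscr K\times Y^*}$ by $\mathcal Q(z,\xi)=\{\mathscr S(z,\xi)\}\times\mathscr G(\gamma z)$. Then there exist constants $c_0,c_2,c_5>0$ such that, with $\mathcal D_1:=\{x\in\mathscr K\cap D(\mathscr L):\|x\|_X\le c_0,\ \|\mathscr Lx\|_{X^*}\le c_5\}$, $\mathcal D_2:=\{\xi\in Y^*:\|\xi\|_{Y^*}\le c_2\}$ and $\mathscr D:=\mathcal D_1\times\mathcal D_2$, one has $\mathcal Q(z,\xi)\subset\mathscr D$ for every $(z,\xi)\in\mathscr D$.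
   Context: Setting. $X$ and $Y$ are real reflexive separable Banach spaces with duals $X^*,Y^*$; $\langle\cdot,\cdot\rangle_X$ and $\langle\cdot,\cdot\rangle_Y$ denote the duality pairings. Fix $1<p<\infty$. $\rightharpoonup$ denotes weak convergence. (H$\mathscr L$) $\mathscr L\colon D(\mathscr L)\subset X\to X^*$ is linear, densely defined and maximal monotone. Put $\mathcal W:=\{x\in D(\mathscr L): \mathscr Lx\in X^*\}$ with the graph norm $\|x\|_{\mathcal W}=\|x\|_X+\|\mathscr Lx\|_{X^*}$; ''$x_n\rightharpoonup x$ in $\mathcal W$'' means $x_n\rightharpoonup x$ in $X$ and $\mathscr Lx_n\rightharpoonup \mathscr Lx$ in $X^*$. (H$\mathscr K$) $\mathscr K\subset X$ is nonempty, closed and convex. (H$\mathscr M$) $\mathscr M\colon\mathscr K\to 2^{\mathscr K}$ has nonempty, closed, convex values, $0\in\operatorname{int}\big(\bigcap_{w\in\mathscr K}\mathscr M(w)\big)$, and: whenever $\{y_n\},\{x_n\}\subset\mathscr K$ satisfy $x_n\in\mathscr M(y_n)\cap D(\mathscr L)$, $y_n\rightharpoonup y$ in $\mathcal W$ and $x_n\rightharpoonup x$ in $\mathcal W$, then $x\in\mathscr M(y)\cap D(\mathscr L)$. (H$\mathscr F$) $\mathscr F\colon X\to X^*$ is bounded (maps bounded sets to bounded sets), monotone and hemicontinuous, and there are constants $c_{\mathscr F}>0$, $d_{\mathscr F}\ge 0$ with $\langle\mathscr F(x),x\rangle_X\ge c_{\mathscr F}\|x\|_X^p-d_{\mathscr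 F}$ for all $x\in X$. (H$\mathscr G$) $\mathscr G\colon Y\to 2^{Y^*}$ has nonempty, closed, convex values, its graph is sequentially closed with respect to strong convergence in $Y$ and weak convergence in $Y^*$, and there are constants $c_{\mathscr G},d_{\mathscr G}\ge0$ with $\|\xi\|_{Y^*}\le c_{\mathscr G}\|z\|_Y^{p-1}+d_{\mathscr G}$ for all $\xi\in\mathscr G(z)$, $z\in Y$. (H$\mathscr E$) $\mathscr E\in X^*$. (H$\gamma$) $\gamma\colon X\to Y$ is linear and continuous, with operator norm $\|\gamma\|$, and its restriction to $\mathcal W$ is compact from $\mathcal W$ into $Y$. (H$\Psi$) $\Psi\colon X\times X\to\mathbb R$ satisfies: (i) for each $x\in X$, $\Psi(x,\cdot)$ is convex and lower semicontinuous; (ii) there are $0<\eta<p$ and a bounded function $b_\Psi\colon X^3\to[0,\infty)$ such that $\Psi(x,y_1)-\Psi(x,y_2)\le b_\Psi(x,y_1,y_2)\|y_1-y_2\|_X^\eta$ for all $x,y_1,y_2\in X$, and for each bounded $B\subset X$, $b_\Psi(z,0,x)/\|x\|_X^{p-\eta}\to0$ as $\|x\|_X\to\infty$ uniformly in $z\in B$; (iii) $\limsup_{n}(\Psi(w_n,y_n)-\Psi(w_n,x_n))\le\Psi(w,y)-\Psi(w,x)$ whenever $\{w_n\},\{y_n\},\{x_n\}\subset\mathscr K\cap D(\mathscr L)$ with $w_n\rightharpoonup w$, $x_n\rightharpoonup x$ in $\mathcal W$ and $y_n\to y$ in $X$; (iv) for every $v\in X$, $0$ belongs to the domain of the convex subdifferential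 $\partial\Psi(v,\cdot)$, $|\Psi(v,0)|\le e_\Psi$ for a constant $e_\Psi$, and there are constants $c_\Psi,d_\Psi\ge0$ and $1\le\beta<p$ with $\Psi(v,y)\ge -c_\Psi\|y\|_X^\beta-d_\Psi$ for all $v,y\in X$. Problem 2 (for given $(z,\xi)\in\mathscr K\times Y^*$): find $x\in\mathscr M(z)\cap D(\mathscr L)$ such that $\langle\mathscr Lx+\mathscr F(x)-\mathscr E,y-x\rangle_X+\langle\xi,\gamma(y-x)\rangle_Y\ge\Psi(z,x)-\Psi(z,y)$ for all $y\in\mathscr M(z)\cap D(\mathscr L)$. *)

From HB Require Import structures.
From mathcomp Require Import all_boot all_order all_algebra.
From mathcomp Require Import all_classical all_reals all_analysis.
Set Implicit Arguments. Unset Strict Implicit. Unset Printing Implicit Defensive.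
Import Order.TTheory GRing.Theory Num.Theory.
Import numFieldNormedType.Exports.
Local Open Scope classical_set_scope.
Local Open Scope ring_scope.

Section Defs.
Context {R : realType}.

Definition is_clf (V : normedModType R) (phi : V -> R) :=
  (forall (a : R) (u v : V), phi (a *: u + v) = a * phi u + phi v) /\ continuous phi.

Definition wcvg (V : normedModType R) (u : nat -> V) (x : V) :=
  forall phi : V -> R, is_clf phi -> (phi \o u) @ \oo --> phi x.

Definition is_dual (V Vs : normedModType R) (pair : Vs -> V -> R) :=
  [/\ (forall f : Vs, is_clf (pair f)),
      (forall (a : R) (f g : Vs) (x : V), pair (a *: f + g) x = a * pair f x + pair g x),
      (forall phi : V -> R, is_clf phi -> exists f : Vs, pair f = phi) &
      (forall f : Vs, `|f| = sup [set `|pair f x| | x in [set x : V | `|x| <= 1]])].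

Definition reflexive_dual (V Vs : normedModType R) (pair : Vs -> V -> R) :=
  forall Phi : Vs -> R, is_clf Phi -> exists x : V, forall f, Phi f = pair f x.

Definition separable (V : normedModType R) :=
  exists D : set V, countable D /\ closure D = setT.

Definition convex_subset (V : normedModType R) (A : set V) :=
  forall (x y : V) (t : R), A x -> A y -> 0 <= t <= 1 -> A (t *: x + (1 - t) *: y).

Definition convex_fun (V : normedModType R) (f : V -> R) :=
  forall (x y : V) (t : R), 0 <= t <= 1 -> f (t *: x + (1 - t) *: y) <= t * f x + (1 - t) * f y.

Definition linear_subspace (V : normedModType R) (A : set V) :=
  A 0 /\ forall (a : R) (x y : V), A x -> A y -> A (a *: x + y).

Definition opnorm (V W : normedModType R) (g : V -> W) :=
  sup [set `|g x| | x in [set x : V | `|x| <= 1]].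

Definition bounded_map (V W : normedModType R) (g : V -> W) :=
  forall M : R, exists K : R, forall x, `|x| <= M -> `|g x| <= K.

(* x_n -> x weakly in the graph space W of L *)
Definition wcvgW (X Xs : normedModType R) (DL : set X) (L : X -> Xs)
    (u : nat -> X) (x : X) :=
  [/\ (forall n, DL (u n)), DL x, wcvg u x & wcvg (L \o u) (L x)].

(* (HL): L : D(L) ⊂ X -> X^* linear, densely defined, maximal monotone *)
Definition HL (X Xs : normedModType R) (pair : Xs -> X -> R) (DL : set X) (L : X -> Xs) :=
  [/\ linear_subspace DL,
      (forall (a : R) (x y : X), DL x -> DL y -> L (a *: x + y) = a *: L x + L y),
      closure DL = setT,
      (forall x y, DL x -> DL y -> 0 <= pair (L x - L y) (x - y)) &
      (forall (x : X) (f : Xs), (forall u, DL u -> 0 <= pair (f - L u) (x - u)) ->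
         DL x /\ f = L x)].


Definition HM (X Xs : normedModType R) (DL : set X) (L : X -> Xs)
    (K : set X) (M : X -> set X) :=
  [/\ (forall w, K w -> [/\ M w !=set0, closed (M w), convex_subset (M w) & M w `<=` K]),
      interior (\bigcap_(w in K) M w) 0 &
      (forall (y x : nat -> X) (y0 x0 : X),
         (forall n, K (y n) /\ K (x n)) ->
         (forall n, M (y n) (x n) /\ DL (x n)) ->
         wcvgW DL L y y0 -> wcvgW DL L x x0 -> M y0 x0 /\ DL x0)].

Definition HF (X Xs : normedModType R) (pair : Xs -> X -> R) (p : R)
    (F : X -> Xs) (cF dF : R) :=
  [/\ bounded_map F,
      (forall x y, 0 <= pair (F x - F y) (x - y)),
      (forall x y z, {within `[0, 1], continuous (fun t : R => pair (F (x + t *: y)) z)}),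
      0 < cF /\ 0 <= dF &
      (forall x, cF * `|x| `^ p - dF <= pair (F x) x)].

Definition strictly_monotone (X Xs : normedModType R) (pair : Xs -> X -> R) (F : X -> Xs) :=
  forall x y, x != y -> 0 < pair (F x - F y) (x - y).

Definition HG (Y Ys : normedModType R) (p : R) (G : Y -> set Ys) (cG dG : R) :=
  [/\ (forall z, G z !=set0 /\ closed (G z) /\ convex_subset (G z)),
      (forall (z : nat -> Y) (xi : nat -> Ys) z0 xi0,
         (forall n, G (z n) (xi n)) -> z @ \oo --> z0 -> wcvg xi xi0 -> G z0 xi0),
      0 <= cG, 0 <= dG &
      (forall z xi, G z xi -> `|xi| <= cG * `|z| `^ (p - 1) + dG)].

Definition Hgamma (X Xs Y : normedModType R) (DL : set X) (L : X -> Xs) (gamma : X -> Y) :=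
  [/\ (forall (a : R) (x y : X), gamma (a *: x + y) = a *: gamma x + gamma y),
      continuous gamma &
      (forall B : set X, B `<=` DL ->
         (exists M : R, forall x, B x -> `|x| + `|L x| <= M) ->
         compact (closure (gamma @` B)))].

Definition HPsi (X Xs : normedModType R) (pair : Xs -> X -> R) (DL : set X) (L : X -> Xs)
    (K : set X) (p : R) (Psi : X -> X -> R) :=
  [/\ (forall x, convex_fun (Psi x) /\ lower_semicontinuous (fun y => (Psi x y)%:E)),
      (exists (eta : R) (b : X -> X -> X -> R),
         [/\ 0 < eta < p,
             (forall x y1 y2, 0 <= b x y1 y2),
             (forall M : R, exists N : R, forall x y1 y2,
                 `|x| <= M -> `|y1| <= M -> `|y2| <= M -> b x y1 y2 <= N),
             (forall x y1 y2, Psi x y1 - Psi x y2 <= b x y1 y2 * `|y1 - y2| `^ eta) &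
             (forall M : R, forall e : R, 0 < e -> exists r : R, forall z x,
                 `|z| <= M -> r <= `|x| -> b z 0 x / `|x| `^ (p - eta) <= e)]),
      (forall (w y x : nat -> X) (w0 y0 x0 : X),
         (forall n, [/\ K (w n), DL (w n), K (y n), DL (y n) & K (x n) /\ DL (x n)]) ->
         wcvgW DL L w w0 -> wcvgW DL L x x0 -> y @ \oo --> y0 ->
         (limn_esup (fun n => (Psi (w n) (y n) - Psi (w n) (x n))%:E)
           <= (Psi w0 y0 - Psi w0 x0)%:E)%E) &
      (exists (e c d beta : R),
         [/\ (forall v, exists zeta : Xs, forall y, pair zeta (y - 0) <= Psi v y - Psi v 0),
             (forall v, `|Psi v 0| <= e),
             [/\ 0 <= c, 0 <= d & 1 <= beta < p] &
             (forall v y, - c * `|y| `^ beta - d <= Psi v y)])].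

Definition solves_P2 (X Xs Y Ys : normedModType R) (pairX : Xs -> X -> R) (pairY : Ys -> Y -> R)
    (DL : set X) (L : X -> Xs) (M : X -> set X) (F : X -> Xs) (E : Xs) (gamma : X -> Y)
    (Psi : X -> X -> R) (z : X) (xi : Ys) (x : X) :=
  [/\ M z x, DL x &
      forall y, M z y -> DL y ->
        Psi z x - Psi z y <= pairX (L x + F x - E) (y - x) + pairY xi (gamma (y - x))].

End Defs.

From HB Require Import structures.
From mathcomp Require Import all_boot all_order all_algebra.
From mathcomp Require Import all_classical all_reals all_analysis.
From mathcomp Require Import lra ring.
Import Order.TTheory GRing.Theory Num.Theory.
Import numFieldNormedType.Exports.
Local Open Scope classical_set_scope.
Local Open Scope ring_scope.

(* Testing Problem 2 with [y = 0], admissible because [0] is interior to every [M w],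
   the coercivity of [F] beats the growth of [Psi], [E] and [xi o gamma].  Choosing
   [c2] as the growth bound of [G] on the ball of radius [|gamma| c0] makes the
   [xi]-term grow like [cG |gamma|^p |x|^p], and [cG |gamma|^p < cF] absorbs it: this
   gives [|x| <= c0].  Testing with [y = rho u] for [u] in the unit ball of [D(L)]
   bounds the residual [L x + F x - E] from below there; since [D(L)] is a dense
   subspace this bounds its dual norm, hence [|L x| <= c5]. *)

Section LinearMap.
Context {R : realType} {V W : normedModType R} {phi : V -> W}.
Hypothesis phi_lin : forall (a : R) u v, phi (a *: u + v) = a *: phi u + phi v.

Lemma lin0 : phi 0 = 0.
Proof.
have := phi_lin 1 0 0; rewrite !addr0 !scale1r => h.
by apply/esym/(addrI (phi 0)); rewrite addr0 -h.
Qed.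

Lemma linZ a u : phi (a *: u) = a *: phi u.
Proof. by have := phi_lin a u 0; rewrite !addr0 lin0 addr0. Qed.

Lemma linN u : phi (- u) = - phi u.
Proof. by rewrite -scaleN1r linZ scaleN1r. Qed.

Lemma linD u v : phi (u + v) = phi u + phi v.
Proof. by have := phi_lin 1 u v; rewrite !scale1r. Qed.

Lemma linB u v : phi (u - v) = phi u - phi v.
Proof. by rewrite linD linN. Qed.

Hypothesis phi_cont : continuous phi.

Lemma opnorm_has_ubound : has_ubound [set `|phi x| | x in [set x : V | `|x| <= 1]].
Proof.
have : phi x @[x --> (0 : V)] --> phi 0 := phi_cont 0.
rewrite lin0 => /cvgr_dist_lt /(_ 1 ltr01) /nbhs_norm0P [e /= e0 he].
exists (2 / e) => _ [x /= x1 <-].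
have /he : `|(e / 2) *: x| < e.
  rewrite normrZ gtr0_norm ?divr_gt0 //.
  apply: le_lt_trans (ler_wpM2l _ x1) _; first by rewrite ltW ?divr_gt0.
  lra.
rewrite sub0r normrN linZ normrZ gtr0_norm ?divr_gt0 // => h.
by rewrite ler_pdivlMr //; nra.
Qed.

Lemma opnorm_ge0 : 0 <= opnorm phi.
Proof.
have : [set `|phi x| | x in [set x : V | `|x| <= 1]] `|phi 0|.
  by exists 0; rewrite //= normr0.
by move/(ub_le_sup opnorm_has_ubound); rewrite lin0 normr0.
Qed.

Lemma opnorm_le x : `|phi x| <= opnorm phi * `|x|.
Proof.
have [->|x0] := eqVneq x 0; first by rewrite lin0 !normr0 mulr0.
have nx : 0 < `|x| by rewrite normr_gt0.
have : [set `|phi x| | x in [set x : V | `|x| <= 1]] `|phi (`|x|^-1 *: x)|.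
  exists (`|x|^-1 *: x) => //=.
  by rewrite normrZ normfV normr_id mulVf ?gt_eqF.
move/(ub_le_sup opnorm_has_ubound); rewrite -/(opnorm phi).
by rewrite linZ normrZ normfV normr_id ler_pdivrMl // mulrC.
Qed.

End LinearMap.

Lemma le_norm_dense {R : realType} {V : normedModType R} (D : set V) (phi : V -> R)
    (C : R) :
  closure D = setT -> continuous phi ->
  (forall v, D v -> `|phi v| <= C * `|v|) -> forall v, `|phi v| <= C * `|v|.
Proof.
move=> Ddense phi_cont hD v.
pose S := (fun v : V => C * `|v| - `|phi v|) @^-1` [set r | 0 <= r].
have S_closed : closed S.
  apply: preimage_closed; last exact: closed_ge.
  move=> x _.
  apply: (@continuousB _ _ _ (fun v : V => C * `|v|) (fun v => `|phi v|)).
    apply: (@continuousM _ _ (fun=> C) (fun v : V => `|v|)).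
      exact: cst_continuous.
    exact: norm_continuous.
  apply: continuous_comp; first exact: phi_cont.
  exact: norm_continuous.
have DS : D `<=` S by move=> x /hD; rewrite /S /preimage /= subr_ge0.
have : S v by rewrite (closure_id S).1 //; apply: (closureS DS); rewrite Ddense.
by rewrite /S /preimage /= subr_ge0.
Qed.

Section Duality.
Context {R : realType} {V Vs : normedModType R} {pair : Vs -> V -> R}.
Hypothesis pair_dual : is_dual pair.

Lemma pair_linr f (a : R) u v : pair f (a *: u + v) = a *: pair f u + pair f v.
Proof. by case: pair_dual => clf _ _ _; case: (clf f). Qed.

Lemma pair_linl x (a : R) f g : pair (a *: f + g) x = a *: pair f x + pair g x.
Proof. by case: pair_dual => _ -> _ _. Qed.

Lemma pair_le f x : `|pair f x| <= `|f| * `|x|.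
Proof.
case: pair_dual => clf _ _ ->; case: (clf f) => f_lin f_cont.
exact: (opnorm_le f_lin f_cont).
Qed.

Lemma dual_norm_le f C : 0 <= C -> (forall x, `|pair f x| <= C * `|x|) -> `|f| <= C.
Proof.
case: pair_dual => _ _ _ -> C0 hC; apply: ge_sup.
  by exists `|pair f 0|, 0; rewrite //= normr0.
by move=> _ [x /= x1 <-]; apply: le_trans (hC x) _; rewrite ler_piMr.
Qed.

Lemma dual_norm_le_dense {D : set V} {f C} :
  linear_subspace D -> closure D = setT ->
  (forall u, D u -> `|u| <= 1 -> - C <= pair f u) -> `|f| <= C.
Proof.
move=> [D0 Dlin] Ddense hD; have f_lin := pair_linr f.
have C0 : 0 <= C by have := hD 0 D0; rewrite normr0 ler01 (lin0 f_lin) lerNl oppr0; apply.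
have f_cont : continuous (pair f) by case: pair_dual => clf _ _ _; case: (clf f).
apply: dual_norm_le => //; apply: le_norm_dense Ddense f_cont _ => v Dv.
have [->|v0] := eqVneq v 0; first by rewrite (lin0 f_lin) !normr0 mulr0.
have nv : 0 < `|v| by rewrite normr_gt0.
pose u := `|v|^-1 *: v.
have Du : D u by have := Dlin (`|v|^-1) v 0 Dv D0; rewrite addr0.
have DNu : D (- u) by have := Dlin (-1) u 0 Du D0; rewrite addr0 scaleN1r.
have nu : `|u| = 1 by rewrite normrZ normfV normr_id mulVf ?gt_eqF.
have hu : `|pair f u| <= C.
  have := hD (- u) DNu; rewrite normrN nu (linN f_lin) => /(_ (lexx 1)) hNu.
  by rewrite ler_norml hD ?nu //; lra.
move: hu; rewrite /u (linZ f_lin) [_ *: _]/= normrM normfV normr_id.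
by rewrite ler_pdivrMl // mulrC.
Qed.

End Duality.

Lemma power_absorb {R : realType} (p beta a S t : R) :
  beta < p -> 0 < a -> 0 <= S -> 1 <= t -> (S / a + 1) `^ (p - beta)^-1 < t ->
  S * t `^ beta < a * t `^ p.
Proof.
move=> bp a0 S0 t1 ht.
have pb0 : 0 < p - beta by rewrite subr_gt0.
have t0 : 0 < t by apply: lt_le_trans t1.
have Sa0 : 0 <= S / a + 1 by rewrite addr_ge0 // divr_ge0 // ltW.
have lt_pow : S / a + 1 < t `^ (p - beta).
  have -> : S / a + 1 = ((S / a + 1) `^ (p - beta)^-1) `^ (p - beta).
    by rewrite -powRrM mulVf ?gt_eqF // powRr1.
  by apply: gt0_ltr_powR; rewrite // nnegrE ?powR_ge0 // ltW.
have tb0 : 0 < t `^ beta by rewrite powR_gt0.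
have -> : t `^ p = t `^ (p - beta) * t `^ beta.
  by rewrite -powRD ?subrK // implybE (gt_eqF t0) orbT.
have : a * ((S / a + 1) * t `^ beta) < a * (t `^ (p - beta) * t `^ beta).
  by rewrite ltr_pM2l // ltr_pM2r.
have -> : a * ((S / a + 1) * t `^ beta) = S * t `^ beta + a * t `^ beta.
  by field; rewrite gt_eqF.
have : 0 < a * t `^ beta by rewrite mulr_gt0.
lra.
Qed.

Section Radii.
Context {R : realType}.
Variables (p beta cF cG dG gn En c d e dF : R).

Definition radius_x : R :=
  Num.max (((En + (dG + 1) * gn + c + d + e + dF) / (cF - cG * gn `^ p) + 1)
             `^ (p - beta)^-1) 1.

Definition radius_xi : R := cG * (gn * radius_x) `^ (p - 1) + dG + 1.

Lemma radius_x_ge1 : 1 <= radius_x.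
Proof. by rewrite /radius_x le_max lexx orbT. Qed.

Hypotheses (p1 : 1 < p) (beta1 : 1 <= beta) (beta_p : beta < p).
Hypotheses (cG_ge0 : 0 <= cG) (dG_ge0 : 0 <= dG) (gn_ge0 : 0 <= gn) (En_ge0 : 0 <= En).
Hypotheses (c_ge0 : 0 <= c) (d_ge0 : 0 <= d) (e_ge0 : 0 <= e) (dF_ge0 : 0 <= dF).
Hypothesis cG_cF : cG * gn `^ p < cF.

Lemma radius_xi_gt0 : 0 < radius_xi.
Proof. by rewrite /radius_xi -addrA ltr_wpDl ?mulr_ge0 ?powR_ge0 ?ltr_wpDl. Qed.

Lemma radius_xi_ge t : 0 <= t -> t <= gn * radius_x ->
  cG * t `^ (p - 1) + dG <= radius_xi.
Proof.
move=> t0 t_le; rewrite /radius_xi -addrA; apply: lerD; last by rewrite lerDl.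
rewrite ler_wpM2l // ge0_ler_powR ?nnegrE ?subr_ge0 ?(ltW p1) //.
exact: le_trans t0 t_le.
Qed.

(* The [cG] part of [radius_xi * gn * t] is at most [cG * gn ^ p * t ^ p] beyond
   [radius_x], so it is absorbed by the coercivity constant [cF]. *)
Lemma le_radius_x t : 0 <= t ->
  cF * t `^ p - dF <= En * t + radius_xi * gn * t + c * t `^ beta + d + e ->
  t <= radius_x.
Proof.
move=> t0 ht; rewrite leNgt; apply/negP => tr.
have t1 : 1 < t := le_lt_trans radius_x_ge1 tr.
set S := En + (dG + 1) * gn + c + d + e + dF.
have S0 : 0 <= S by rewrite /S !addr_ge0 // mulr_ge0 // addr_ge0.
have t_tb : t <= t `^ beta by rewrite le1r_powR // ltW.
have tb1 : 1 <= t `^ beta := le_trans (ltW t1) t_tb.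
have cG_part : cG * (gn * radius_x) `^ (p - 1) * gn * t <= cG * gn `^ p * t `^ p.
  have r1 := radius_x_ge1.
  have p0 : 0 < p := lt_trans ltr01 p1.
  have k0 : 0 <= cG * gn * gn `^ (p - 1) * t by rewrite !mulr_ge0 ?powR_ge0.
  rewrite powRM ?(le_trans ler01 r1) //.
  rewrite -[gn `^ p](mulr_powRB1 gn_ge0) ?p0 //.
  rewrite -[t `^ p](mulr_powRB1 t0) ?p0 //.
  have -> : cG * (gn `^ (p - 1) * radius_x `^ (p - 1)) * gn * t =
    cG * gn * gn `^ (p - 1) * t * radius_x `^ (p - 1) by ring.
  have -> : cG * (gn * gn `^ (p - 1)) * (t * t `^ (p - 1)) =
    cG * gn * gn `^ (p - 1) * t * t `^ (p - 1) by ring.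
  rewrite ler_wpM2l //; apply: ge0_ler_powR; rewrite ?nnegrE ?subr_ge0 ?(ltW p1) //.
    exact: le_trans ler01 r1.
  exact: ltW.
have absorb : S * t `^ beta < (cF - cG * gn `^ p) * t `^ p.
  apply: power_absorb; rewrite ?subr_gt0 //; first exact: ltW.
  by apply: le_lt_trans tr; rewrite /radius_x le_max lexx.
suff : (cF - cG * gn `^ p) * t `^ p <= S * t `^ beta by rewrite leNgt absorb.
move: ht cG_part; rewrite /radius_xi /S.
set P := t `^ p; set Q := t `^ beta.
have : En * t <= En * Q by rewrite ler_wpM2l.
have : (dG + 1) * gn * t <= (dG + 1) * gn * Q by rewrite ler_wpM2l // mulr_ge0 ?addr_ge0.
have : d + e + dF <= (d + e + dF) * Q by rewrite ler_peMr ?addr_ge0.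
nra.
Qed.

End Radii.

Lemma interior_ball {R : realType} {V : normedModType R} {A : set V} :
  interior A 0 -> exists rho : R, [/\ 0 < rho, rho <= 1 & forall y, `|y| <= rho -> A y].
Proof.
rewrite /interior => /nbhs_norm0P [r /= r0 hr].
exists (Num.min (r / 2) 1); split.
- by rewrite lt_min ltr01 divr_gt0.
- by rewrite ge_min lexx orbT.
- move=> y hy; apply: hr; apply: le_lt_trans hy _.
  by rewrite gt_min; apply/orP; left; lra.
Qed.

Definition residual_bound {R : realType} (c beta d e dF En gn r0 C N : R) : R :=
  c * r0 `^ beta + d + e + N + dF + En * r0 + C * gn * r0 + C * gn.

Section Problem2.
Context {R : realType} {X Xs Y Ys : normedModType R}.
Context {pairX : Xs -> X -> R} {pairY : Ys -> Y -> R} {DL : set X} {L : X -> Xs}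
  {M : X -> set X} {F : X -> Xs} {E : Xs} {gamma : X -> Y} {Psi : X -> X -> R}.
Context {p cF dF beta c d e eta : R} {b : X -> X -> X -> R}.
Hypotheses (pairX_dual : is_dual pairX) (pairY_dual : is_dual pairY).
Hypothesis hL : HL pairX DL L.
Hypotheses (cF_gt0 : 0 < cF) (F_coercive : forall x, cF * `|x| `^ p - dF <= pairX (F x) x).
Hypotheses (gamma_lin : forall (a : R) u v, gamma (a *: u + v) = a *: gamma u + gamma v)
  (gamma_cont : continuous gamma).
Hypotheses (c_ge0 : 0 <= c) (beta_ge1 : 1 <= beta)
  (Psi_ge : forall v y, - c * `|y| `^ beta - d <= Psi v y) (Psi0_le : forall v, `|Psi v 0| <= e).
Hypotheses (eta_gt0 : 0 < eta) (b_ge0 : forall x y1 y2, 0 <= b x y1 y2)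
  (Psi_holder : forall x y1 y2, Psi x y1 - Psi x y2 <= b x y1 y2 * `|y1 - y2| `^ eta).

Definition residual (x : X) : Xs := L x + F x - E.

Let sol := solves_P2 pairX pairY DL L M F E gamma Psi.

Lemma solves_P2_test {z xi x y} : sol z xi x -> M z y -> DL y ->
  Psi z x - Psi z y <= pairX (residual x) y - pairX (residual x) x
                       + (pairY xi (gamma y) - pairY xi (gamma x)).
Proof.
case=> _ _ hsol My DLy; have := hsol y My DLy.
by rewrite (linB (pair_linr pairX_dual _)) (linB gamma_lin) (linB (pair_linr pairY_dual _)).
Qed.

Lemma pair_L_ge0 {x} : DL x -> 0 <= pairX (L x) x.
Proof.
case: hL => [[DL0 _] Llin _ Lmon _] DLx.
have L0 : L 0 = 0.
  have := Llin 1 0 0 DL0 DL0; rewrite !addr0 !scale1r => h.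
  by apply/esym/(addrI (L 0)); rewrite addr0 -h.
by have := Lmon x 0 DLx DL0; rewrite L0 !subr0.
Qed.

Lemma pair_residual_ge {x} : DL x ->
  cF * `|x| `^ p - dF - `|E| * `|x| <= pairX (residual x) x.
Proof.
move=> DLx; have pair_x := pair_linl pairX_dual x.
rewrite /residual (linB pair_x) (linD pair_x).
have := pair_L_ge0 DLx; have := F_coercive x.
have := le_trans (ler_norm _) (pair_le pairX_dual E x).
lra.
Qed.

Lemma pair_gamma_le {xi C} y :
  `|xi| <= C -> `|pairY xi (gamma y)| <= C * opnorm gamma * `|y|.
Proof.
move=> xiC; apply: le_trans (pair_le pairY_dual _ _) _.
by rewrite -mulrA ler_pM ?normr_ge0 // (opnorm_le gamma_lin gamma_cont).
Qed.

Lemma solution_coercive_estimate {z xi x C} : sol z xi x -> M z 0 -> `|xi| <= C ->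
  cF * `|x| `^ p - dF <=
    `|E| * `|x| + C * opnorm gamma * `|x| + c * `|x| `^ beta + d + e.
Proof.
move=> hsol Mz0 xiC; have DL0 : DL 0 by case: hL => [[]].
have DLx : DL x by case: hsol.
have := solves_P2_test hsol Mz0 DL0.
rewrite (lin0 (pair_linr pairX_dual _)) (lin0 gamma_lin) (lin0 (pair_linr pairY_dual _)).
have := pair_residual_ge DLx.
have := Psi_ge z x; have := Psi0_le z; rewrite ler_norml => /andP[_ Psi_z0].
have := pair_gamma_le x xiC; rewrite ler_norml => /andP[? ?].
lra.
Qed.

Lemma Psi_le_of_b_le {v y N} : b v y 0 <= N -> `|y| <= 1 -> Psi v y <= e + N.
Proof.
move=> bN y1; have := Psi_holder v y 0; rewrite subr0.
have y_eta : `|y| `^ eta <= 1.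
  have [->|y0] := eqVneq `|y| 0; first by rewrite powR0 ?gt_eqF.
  rewrite -(powRr0 `|y|); apply: ger_powR; last exact: ltW.
  by rewrite lt_neqAle eq_sym y0 normr_ge0.
have : b v y 0 * `|y| `^ eta <= N * 1 by rewrite ler_pM ?powR_ge0.
have := Psi0_le v; rewrite ler_norml => /andP[_ ?].
lra.
Qed.

Lemma residual_ball_ge {z xi x r0 C N rho u} :
  sol z xi x -> 0 < rho -> rho <= 1 -> (forall y, `|y| <= rho -> M z y) ->
  `|x| <= r0 -> `|xi| <= C -> (forall y, `|y| <= 1 -> b z y 0 <= N) ->
  DL u -> `|u| <= 1 ->
  - (residual_bound c beta d e dF `|E| (opnorm gamma) r0 C N / rho)
    <= pairX (residual x) u.
Proof.
move=> hsol rho0 rho1 ball_M xr0 xiC bN DLu u1.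
have rho_u : `|rho *: u| <= rho by rewrite normrZ gtr0_norm // ler_piMr // ltW.
have DL_rho_u : DL (rho *: u).
  by case: hL => [[DL0 DLlin] _ _ _ _]; have := DLlin rho u 0 DLu DL0; rewrite addr0.
have := solves_P2_test hsol (ball_M _ rho_u) DL_rho_u.
rewrite (linZ (pair_linr pairX_dual _)) (linZ gamma_lin) (linZ (pair_linr pairY_dual _)).
move=> test.
have {}test : Psi z x - Psi z (rho *: u) <= rho * pairX (residual x) u
    - pairX (residual x) x + (rho * pairY xi (gamma u) - pairY xi (gamma x)) := test.
have Psi_rho_u := Psi_le_of_b_le (bN _ (le_trans rho_u rho1)) (le_trans rho_u rho1).
have DLx : DL x by case: hsol.
have Psi_x : - c * r0 `^ beta - d <= Psi z x.
  apply: le_trans (Psi_ge z x); rewrite lerD2r !mulNr lerN2 ler_wpM2l //.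
  apply: ge0_ler_powR; rewrite ?nnegrE ?normr_ge0 ?(le_trans ler01 beta_ge1) //.
  exact: le_trans (normr_ge0 x) xr0.
have A_x : - dF - `|E| * r0 <= pairX (residual x) x.
  apply: le_trans (pair_residual_ge DLx).
  have : `|E| * `|x| <= `|E| * r0 by rewrite ler_wpM2l.
  have := mulr_ge0 (ltW cF_gt0) (powR_ge0 `|x| p).
  lra.
have Cg0 : 0 <= C * opnorm gamma.
  exact: mulr_ge0 (le_trans (normr_ge0 _) xiC) (opnorm_ge0 gamma_lin gamma_cont).
have xi_u : rho * pairY xi (gamma u) <= C * opnorm gamma.
  apply: le_trans (_ : rho * (C * opnorm gamma) <= _); last by rewrite ler_piMl.
  rewrite ler_wpM2l ?(ltW rho0) //; apply: le_trans (ler_norm _) _.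
  by apply: le_trans (pair_gamma_le u xiC) _; rewrite ler_piMr.
have xi_x : - (C * opnorm gamma * r0) <= pairY xi (gamma x).
  rewrite lerNl; apply: le_trans (ler_norm _) _; rewrite normrN.
  by apply: le_trans (pair_gamma_le x xiC) _; rewrite ler_wpM2l.
suff : - residual_bound c beta d e dF `|E| (opnorm gamma) r0 C N
         <= rho * pairX (residual x) u.
  by move=> h; rewrite -(ler_pM2l rho0) mulrN mulrCA mulfV ?gt_eqF // mulr1.
rewrite /residual_bound; lra.
Qed.

Lemma norm_L_solution_le {z xi x r0 C N rho KF} :
  sol z xi x -> 0 < rho -> rho <= 1 -> (forall y, `|y| <= rho -> M z y) ->
  `|x| <= r0 -> `|xi| <= C -> (forall y, `|y| <= 1 -> b z y 0 <= N) -> `|F x| <= KF ->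
  `|L x| <= residual_bound c beta d e dF `|E| (opnorm gamma) r0 C N / rho + KF + `|E|.
Proof.
move=> hsol rho0 rho1 ball_M xr0 xiC bN FKF.
have res_le :
    `|residual x| <= residual_bound c beta d e dF `|E| (opnorm gamma) r0 C N / rho.
  case: hL => DL_sub _ DL_dense _ _.
  apply: (dual_norm_le_dense pairX_dual DL_sub DL_dense) => u DLu u1.
  exact: residual_ball_ge hsol rho0 rho1 ball_M xr0 xiC bN DLu u1.
have -> : L x = residual x + E - F x by rewrite /residual subrK addrK.
apply: le_trans (ler_normB _ _) _; have := ler_normD (residual x) E.
lra.
Qed.

End Problem2.

Theorem mainTheorem5 (R : realType)
  (X : completeNormedModType R) (Xs : normedModType R) (pairX : Xs -> X -> R)
  (Y : completeNormedModType R) (Ys : normedModType R) (pairY : Ys -> Y -> R)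
  (p : R) (DL : set X) (L : X -> Xs) (K : set X) (M : X -> set X)
  (F : X -> Xs) (G : Y -> set Ys) (E : Xs) (gamma : X -> Y) (Psi : X -> X -> R)
  (cF dF cG dG : R) :
  is_dual pairX -> reflexive_dual pairX -> separable X ->
  is_dual pairY -> reflexive_dual pairY -> separable Y ->
  1 < p ->
  HL pairX DL L ->
  (K !=set0 /\ closed K /\ convex_subset K) ->
  HM DL L K M ->
  HF pairX p F cF dF ->
  HG p G cG dG ->
  Hgamma DL L gamma ->
  HPsi pairX DL L K p Psi ->
  cG * opnorm gamma `^ p < cF ->
  strictly_monotone pairX F ->
  exists c0 c2 c5 : R, [/\ 0 < c0, 0 < c2, 0 < c5 &
    forall (z : X) (xi : Ys),
      K z -> DL z -> `|z| <= c0 -> `|L z| <= c5 -> `|xi| <= c2 ->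
      (forall x, solves_P2 pairX pairY DL L M F E gamma Psi z xi x ->
         [/\ K x, DL x, `|x| <= c0 & `|L x| <= c5]) /\
      (forall eta, G (gamma z) eta -> `|eta| <= c2)].
Proof.
move=> pX_dual _ _ pY_dual _ _ p1 hL _ [M_K M_int _] [F_bnd _ _ [cF0 dF0] F_coer]
  [_ _ cG0 dG0 G_growth] [g_lin g_cont _] [_ Psi_holder _ Psi_growth] cG_cF _.
case: Psi_holder => eta [b [/andP[eta0 _] b0 b_bnd holder _]].
case: Psi_growth => e [c [d [beta [_ Psi0 [c_ge0 d_ge0 /andP[beta1 betap]] Psi_ge]]]].
have gn0 := opnorm_ge0 g_lin g_cont; have e0 := le_trans (normr_ge0 _) (Psi0 0).
set r0 := radius_x p beta cF cG dG (opnorm gamma) `|E| c d e dF.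
set r2 := radius_xi p beta cF cG dG (opnorm gamma) `|E| c d e dF.
have r0_ge1 : 1 <= r0 := radius_x_ge1 _ _ _ _ _ _ _ _ _ _ _.
have [rho [rho0 rho1 ball_M]] := interior_ball M_int.
have [N bN] := b_bnd r0; have [KF F_le] := F_bnd r0.
pose B := residual_bound c beta d e dF `|E| (opnorm gamma) r0 r2 N.
exists r0, r2, (Num.max (B / rho) 0 + Num.max KF 0 + `|E| + 1); split.
- exact: lt_le_trans ltr01 r0_ge1.
- exact: radius_xi_gt0.
- by apply: ltr_wpDl; rewrite ?addr_ge0 ?le_max ?lexx ?orbT.
move=> z xi Kz _ zr0 _ xir2; split; last first.
  move=> eta' /G_growth /le_trans; apply; apply: radius_xi_ge => //.
  by apply: le_trans (opnorm_le g_lin g_cont z) _; rewrite ler_wpM2l.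
move=> x hsol; have DLx : DL x by case: hsol.
have M_z y : `|y| <= rho -> M z y by move=> /ball_M; apply.
have M_z0 : M z 0 by apply: M_z; rewrite normr0 ltW.
have xr0 : `|x| <= r0.
  apply: le_radius_x => //; rewrite ?normr_ge0 //.
  by have := solution_coercive_estimate pX_dual pY_dual hL F_coer g_lin g_cont
    Psi_ge Psi0 hsol M_z0 xir2.
have bN1 y : `|y| <= 1 -> b z y 0 <= N by move=> y1; apply: bN; rewrite ?normr0; lra.
split => //; first by case: (M_K z Kz) => _ _ _; apply; case: hsol.
apply: le_trans (norm_L_solution_le pX_dual pY_dual hL cF0 F_coer g_lin g_cont c_ge0 beta1
  Psi_ge Psi0 eta0 b0 holder hsol rho0 rho1 M_z xr0 xir2 bN1 (F_le x xr0)) _.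
have : B / rho <= Num.max (B / rho) 0 by rewrite le_max lexx.
have : KF <= Num.max KF 0 by rewrite le_max lexx.
rewrite -/B; lra.
Qed.
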